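(* Let $N\in\mathbb N$, $\mathbb S\subset\mathbb R^n$ measurable, $\mathbf s_0\in\mathbb S$, $S\in[0,1]$, and $\gamma_1,\ldots,\gamma_{N-1}\in(0,1]$. For each $k\in\{0,\ldots,N-1\}$ let $\boldsymbol\pi^k=\{\boldsymbol\pi^k_k,\ldots,\boldsymbol\pi^k_{N-1}\}$ be a shrinking-horizon policy sequence. Assume $$\mathbb P[\mathbf s_{1,\ldots,N}\in\mathbb S\mid \mathbf s_0,\boldsymbol\pi^0]\ge S_0\ge S$$ and that for every $k\in\{1,\ldots,N-1\}$ and every state $\mathbf s_k\in\mathbb S$, $$\mathbb P[\mathbf s_{k+1,\ldots,N}\in\mathbb S\mid \mathbf s_k,\boldsymbol\pi^k]\ge S_k,\qquad S_k:=\gamma_k\,\mathbb P[\mathbf s_{k+1,\ldots,N}\in\mathbb S\mid \mathbf s_k,\boldsymbol\pi^{k-1}],$$ where in the right-hand side $\boldsymbol\pi^{k-1}$ is used through its components $\boldsymbol\pi^{k-1}_k,\ldots,\boldsymbol\pi^{k-1}_{N-1}$. Then the closed-loop policy sequence $\{\boldsymbol\pi^0_0,\boldsymbol\pi^1_1,\ldots,\boldsymbol\pi^{N-1}_{N-1}\}$ (i.e. $\mathbf u_k=\boldsymbol\pi^k_k(\mathbf s_k)$ for $k=0,\ldots,N-1$) satisfies $$\mathbb P\big[\mathbf s_{1,\ldots,N}\in\mathbb S\mid \mathbf s_0,\{\boldsymbol\pi^0_0,\ldots,\boldsymbol\pi^{N-1}_{N-1}\}\big]\ge \Big(\prod_{k=1}^{N-1}\gamma_k\Big)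 S_0 .$$
   Context: States $\mathbf s_k\in\mathbb R^n$ evolve as a controlled Markov chain with transition probability density $\rho[\mathbf s_+\mid\mathbf s,\mathbf u]$; a policy applied at time $t$ is a measurable map $\mathbf s\mapsto\mathbf u$. The notation $\mathbf s_{a,\ldots,b}\in\mathbb S$ means $\mathbf s_j\in\mathbb S$ for all $j=a,\ldots,b$. For a policy sequence $\boldsymbol\pi$ defined at times $0,\ldots,N-1$, $\mathbb P[\mathbf s_{1,\ldots,N}\in\mathbb S\mid\mathbf s_0,\boldsymbol\pi]$ is the mission-wide probability of safety (MWPS). For a policy sequence with components at times $k,\ldots,N-1$, $\mathbb P[\mathbf s_{k+1,\ldots,N}\in\mathbb S\mid\mathbf s_k,\cdot]$ is the remaining MWPS: the probability that the chain started at $\mathbf s_k$ at time $k$ and driven by those components stays in $\mathbb S$ at times $k+1,\ldots,N$. *)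

From HB Require Import structures.
From mathcomp Require Import all_boot all_order all_algebra.
From mathcomp Require Import all_classical all_reals all_analysis.
Set Implicit Arguments. Unset Strict Implicit. Unset Printing Implicit Defensive.
Import Order.TTheory GRing.Theory Num.Theory.
Local Open Scope classical_set_scope.
Local Open Scope ring_scope.
Local Open Scope ereal_scope.

(* Controlled Markov chain on a measurable state space T with control space U,
   transition law given by a probability kernel P : (state, control) ~> next state.
   A policy sequence is p : nat -> T -> U, p j being the policy applied at time j.

   rem_safe P SS p m j s = probability that the chain started at s at time j,
   driven by p j, p (j+1), ..., p (j+m-1), stays in SS at times j+1, ..., j+m,
   computed as the iterated integral (law of the chain):
     rem_safe 0 j s = 1,
     rem_safe (m+1) j s = \int_{t in SS} rem_safe m (j+1) t  P((s, p j s))(dt). *)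
Fixpoint rem_safe (R : realType) (d1 d2 : measure_display)
  (T : measurableType d1) (U : measurableType d2)
  (P : R.-pker (T * U)%type ~> T) (SS : set T) (p : nat -> T -> U)
  (m j : nat) (s : T) {struct m} : \bar R :=
  match m with
  | 0%N => 1
  | m'.+1 => \int[P (s, p j s)]_(t in SS) rem_safe P SS p m' j.+1 t
  end.

(* Remaining MWPS  P[s_{k+1..N} in SS | s_k = s, p]  (p used via p k, ..., p (N-1)).
   For k = 0 this is the mission-wide probability of safety P[s_{1..N} in SS | s_0, p]. *)
Definition mwps (R : realType) (d1 d2 : measure_display)
  (T : measurableType d1) (U : measurableType d2)
  (P : R.-pker (T * U)%type ~> T) (SS : set T) (N : nat) (p : nat -> T -> U)
  (k : nat) (s : T) : \bar R :=
  rem_safe P SS p (N - k)%N k s.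

From HB Require Import structures.
From mathcomp Require Import all_boot all_order all_algebra.
From mathcomp Require Import all_classical all_reals all_analysis.
From mathcomp Require Import measurable_realfun.
Set Implicit Arguments. Unset Strict Implicit. Unset Printing Implicit Defensive.
Import Order.TTheory GRing.Theory Num.Theory.
Local Open Scope classical_set_scope.
Local Open Scope ring_scope.

(* The remaining MWPS [mwps P SS N p k] obeys the one-step recursion
     V_p(k, s) = \int_{t in SS} V_p(k+1, t)  P((s, p k s))(dt)     (k < N),
   with V_p(N, _) = 1.  Two policy sequences that use the same control at
   time k can therefore be compared one step at a time: a bound
   c * V_p(k+1, .) <= V_q(k+1, .) on SS, with c >= 0, integrates to
   c * V_p(k, s) <= V_q(k, s) (monotonicity and homogeneity of the integral).

   The closed-loop sequence pi_j^j uses the control pi_k^k at time k, as does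
   pi^k.  A backward induction on k, combining this comparison with the
   hypothesis gamma_{k+1} V_{pi^k}(k+1, .) <= V_{pi^{k+1}}(k+1, .) on SS, gives
     (prod_{k<j<N} gamma_j) * V_{pi^k}(k, s) <= V_{closed}(k, s)   on SS.
   At k = 0 this, together with S0 <= V_{pi^0}(0, s0), is the proposition. *)

Section RemainingSafety.
Variables (R : realType) (d1 d2 : measure_display).
Variables (T : measurableType d1) (U : measurableType d2).
Variables (P : R.-pker (T * U)%type ~> T) (SS : set T).
Hypothesis mSS : measurable SS.

Lemma rem_safe_ge0 (p : nat -> T -> U) (m j : nat) (s : T) :
  (0 <= rem_safe P SS p m j s)%E.
Proof.
elim: m j s => [|m IH] j s //=.
exact: integral_ge0.
Qed.

Lemma rem_safe_measurable (p : nat -> T -> U) (m j : nat) :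
  (forall i, (j <= i < j + m)%N -> measurable_fun setT (p i)) ->
  measurable_fun setT (rem_safe P SS p m j).
Proof.
elim: m j => [|m IH] j mp /=; first exact: measurable_cst.
have mnext : measurable_fun setT (rem_safe P SS p m j.+1).
  apply: IH => i /andP[ji iS]; apply: mp.
  by rewrite (ltnW ji) -addSnnS.
have -> : (fun s => \int[P (s, p j s)]_(t in SS) rem_safe P SS p m j.+1 t)%E =
    (fun z => \int[P z]_t ((rem_safe P SS p m j.+1) \_ SS) t)%E
      \o (fun s => (s, p j s)).
  by apply: funext => s /=; rewrite integral_mkcond.
apply: measurableT_comp.
  apply: measurable_fun_integral_kernel.
  - by move=> V mV; exact: measurable_kernel.
  - by apply: erestrict_ge0 => x _; exact: rem_safe_ge0.
  - by apply/(measurable_restrictT _ _).1 => //; exact: measurable_funTS.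
apply: measurable_fun_pair; first exact: measurable_id.
by apply: mp; rewrite leqnn addnS ltnS leq_addr.
Qed.

Variable N : nat.

Lemma mwps_measurable (p : nat -> T -> U) (k : nat) :
  (forall i, (k <= i < N)%N -> measurable_fun setT (p i)) ->
  measurable_fun setT (mwps P SS N p k).
Proof.
move=> mp; apply: rem_safe_measurable => i /andP[ki iN].
apply: mp; rewrite ki /=; case: (leqP k N) => [kN | Nk].
  by rewrite subnKC in iN.
by move: iN; rewrite (eqP (ltnW Nk)) addn0 ltnNge ki.
Qed.

Lemma mwps_end (p : nat -> T -> U) (s : T) : mwps P SS N p N s = 1%E.
Proof. by rewrite /mwps subnn. Qed.

Lemma mwps_succ (p : nat -> T -> U) (k : nat) (s : T) : (k < N)%N ->
  mwps P SS N p k s = (\int[P (s, p k s)]_(t in SS) mwps P SS N p k.+1 t)%E.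
Proof. by move=> kN; rewrite /mwps -(subnSK kN). Qed.

Lemma mwps_scale_le (p q : nat -> T -> U) (k : nat) (c : R) (s : T) :
  (k < N)%N -> p k s = q k s -> 0 <= c ->
  measurable_fun setT (mwps P SS N p k.+1) ->
  measurable_fun setT (mwps P SS N q k.+1) ->
  (forall t, SS t -> (c%:E * mwps P SS N p k.+1 t <= mwps P SS N q k.+1 t)%E) ->
  (c%:E * mwps P SS N p k s <= mwps P SS N q k s)%E.
Proof.
move=> kN pq c0 mp mq le_next.
rewrite !mwps_succ // -pq -ge0_integralZl_EFin //; last 2 first.
- by move=> t _; exact: rem_safe_ge0.
- exact: measurable_funTS.
apply: ge0_le_integral => //.
- by move=> t _; apply: mule_ge0; [rewrite lee_fin | exact: rem_safe_ge0].
- by apply: measurable_funeM; exact: measurable_funTS.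
- exact: measurable_funTS.
Qed.

End RemainingSafety.

Definition closed_loop {T U : Type} (pi : nat -> nat -> T -> U) : nat -> T -> U :=
  fun j => pi j j.

Definition discount_tail {R : realType} (gamma : nat -> R) (N k : nat) : R :=
  \prod_(k.+1 <= j < N) gamma j.

Section ShrinkingHorizon.
Variables (R : realType) (d1 d2 : measure_display).
Variables (T : measurableType d1) (U : measurableType d2).
Variables (P : R.-pker (T * U)%type ~> T) (N : nat) (SS : set T).
Hypothesis mSS : measurable SS.
Variable gamma : nat -> R.
Hypothesis hgamma : forall k, (1 <= k < N)%N -> 0 < gamma k <= 1.
Variable pi : nat -> nat -> T -> U.
Hypothesis hpi : forall k j, (k <= j < N)%N -> measurable_fun setT (pi k j).
Hypothesis hk : forall k, (1 <= k < N)%N -> forall s, SS s ->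
  ((gamma k)%:E * mwps P SS N (pi k.-1) k s <= mwps P SS N (pi k) k s)%E.

Lemma discount_tail_ge0 (k : nat) : 0 <= discount_tail gamma N k.
Proof.
rewrite /discount_tail big_seq_cond; apply: prodr_ge0 => j.
rewrite mem_index_iota andbT => /andP[kj jN].
have j1N : (1 <= j < N)%N by rewrite jN andbT (leq_trans _ kj).
by have /andP[/ltW] := hgamma j1N.
Qed.

Lemma discount_tail_end (k : nat) : (N <= k.+1)%N -> discount_tail gamma N k = 1.
Proof. by move=> Nk; rewrite /discount_tail big_geq. Qed.

Lemma discount_tailS (k : nat) : (k.+1 < N)%N ->
  discount_tail gamma N k = gamma k.+1 * discount_tail gamma N k.+1.
Proof. by move=> kN; rewrite /discount_tail big_ltn. Qed.

Lemma planned_mwps_measurable (k j : nat) : (k <= j)%N ->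
  measurable_fun setT (mwps P SS N (pi k) j).
Proof.
move=> kj; apply: (mwps_measurable _ mSS) => i /andP[ji iN].
by apply: hpi; rewrite (leq_trans kj ji).
Qed.

Lemma closed_loop_mwps_measurable (j : nat) :
  measurable_fun setT (mwps P SS N (closed_loop pi) j).
Proof.
apply: (mwps_measurable _ mSS) => i /andP[_ iN].
by apply: hpi; rewrite leqnn.
Qed.

(* Since pi^k and the closed loop agree at time k, the comparison at time k
   reduces to the comparison at time k+1. *)
Lemma closed_loop_step (k : nat) (s : T) : (k < N)%N ->
  (forall t, SS t -> ((discount_tail gamma N k)%:E * mwps P SS N (pi k) k.+1 t
                        <= mwps P SS N (closed_loop pi) k.+1 t)%E) ->
  ((discount_tail gamma N k)%:E * mwps P SS N (pi k) k s
     <= mwps P SS N (closed_loop pi) k s)%E.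
Proof.
move=> kN; apply: (mwps_scale_le mSS) => //.
- exact: discount_tail_ge0.
- exact: planned_mwps_measurable.
- exact: closed_loop_mwps_measurable.
Qed.

Lemma closed_loop_bound (k : nat) (s : T) : (k < N)%N -> SS s ->
  ((discount_tail gamma N k)%:E * mwps P SS N (pi k) k s
     <= mwps P SS N (closed_loop pi) k s)%E.
Proof.
move=> kN; have := subnKC kN; move: (N - k.+1)%N => n.
elim: n k s {kN} => [|n IH] k s hkn Ss.
  rewrite addn0 in hkn; apply: closed_loop_step; first by rewrite -hkn.
  by move=> t _; rewrite discount_tail_end ?hkn // -hkn !mwps_end mul1e.
have k1N : (k.+1 < N)%N by rewrite -hkn addnS ltnS leq_addr.
apply: closed_loop_step => [|t St]; first exact: ltnW k1N.
have planned := hk (k := k.+1) k1N St.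
have closed := IH k.+1 t (etrans (addSnnS _ _) hkn) St.
apply: le_trans closed; rewrite discount_tailS // EFinM -muleA muleCA.
by apply: lee_wpmul2l planned; rewrite lee_fin discount_tail_ge0.
Qed.

End ShrinkingHorizon.

(* pi k j = component pi^k_j of the k-th shrinking-horizon policy sequence
   (only k <= j < N is relevant). *)
Theorem proposition1 (R : realType) (d1 d2 : measure_display)
  (T : measurableType d1) (U : measurableType d2)
  (P : R.-pker (T * U)%type ~> T)
  (N : nat) (SS : set T) (mSS : measurable SS) (s0 : T) (s0S : SS s0)
  (Sb S0 : R) (hSb : 0 <= Sb <= 1)
  (gamma : nat -> R) (hgamma : forall k, (1 <= k < N)%N -> 0 < gamma k <= 1)
  (pi : nat -> nat -> T -> U)
  (hpi : forall k j, (k <= j < N)%N -> measurable_fun setT (pi k j))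
  (h0 : (S0%:E <= mwps P SS N (pi 0%N) 0%N s0)%E) (hS0 : Sb <= S0)
  (hk : forall k, (1 <= k < N)%N -> forall s, SS s ->
          ((gamma k)%:E * mwps P SS N (pi k.-1) k s <= mwps P SS N (pi k) k s)%E) :
  (((\prod_(1 <= k < N) gamma k) * S0)%:E
     <= mwps P SS N (fun j => pi j j) 0%N s0)%E.
Proof.
have [N0 | Npos] := posnP N.
  by move: h0; rewrite N0 big_geq // mul1r.
have bound := closed_loop_bound mSS hgamma hpi hk Npos s0S.
apply: le_trans bound; rewrite EFinM; apply: lee_wpmul2l h0.
by rewrite lee_fin; exact: (discount_tail_ge0 hgamma 0).
Qed.
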